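(* Let $M$ be a matroid such that the basis pair graph of each minor of $M$ is connected. Let $k\geq 2$ and let $S$ be a multiset of size $k\,r(M)$ whose elements lie in $E(M)$. If $G_M(S)$ is connected, then $G'_M(S)$ is connected.
   Context: For a matroid $N$, the basis pair graph $G(N)$ has as vertices the ordered triples $(A_1,A_2,A_3)$ of subsets of $E(N)$ with $A_1,A_2$ disjoint bases of $N$ and $A_3=E(N)-(A_1\cup A_2)$; two vertices $(A_1,A_2,A_3)$, $(B_1,B_2,B_3)$ are adjacent if $|A_1-B_1|+|A_2-B_2|+|A_3-B_3|=2$. The graph $G_M(S)$ has as vertices all multisets of $k$ bases of $M$ whose multiset union is $S$, two vertices being adjacent if one is obtained from the other by a symmetric exchange between two of its bases: replacing bases $B_i,B_j$ by $(B_i-b_i)\cup\{b_j\}$ and $(B_j-b_j)\cup\{b_i\}$ for some $b_i\in B_i-B_j$, $b_j\in B_j-B_i$. The graph $G'_M(S)$ is defined the same way but with ordered $k$-tuples $(B_1,\dots,B_k)$ of bases of $M$ (with multiset union $S$) as vertices: $(A_1,\dots,A_k)$ and $(B_1,\dots,B_k)$ are adjacent if for some $1\le i<j\le k$ and some $b_i\in B_i-B_j$, $b_j\in B_j-B_i$, the tuple $(A_1,\dots,A_k)$ is obtained from $(B_1,\dots,B_k)$ by replacing $B_i$ by $(B_i-b_i)\cup\{b_j\}$ and $B_j$ by $(B_j-b_j)\cup\{b_i\}$ (other coordinates unchanged). Empty graphs are regarded as connected. *)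

From mathcomp Require Import all_boot.
Set Implicit Arguments. Unset Strict Implicit. Unset Printing Implicit Defensive.

Section Matroids.
Variable T : finType.

Definition is_matroid (E : {set T}) (B : {set {set T}}) : Prop :=
  [/\ B != set0,
      (forall B1, B1 \in B -> B1 \subset E) &
      (forall B1 B2, B1 \in B -> B2 \in B -> forall x, x \in B1 :\: B2 ->
         exists2 y, y \in B2 :\: B1 & y |: (B1 :\ x) \in B)].

Definition indep (B : {set {set T}}) (I : {set T}) : bool :=
  [exists B0 in B, I \subset B0].

Definition rk (B : {set {set T}}) (X : {set T}) : nat :=
  \max_(I : {set T} | indep B I && (I \subset X)) #|I|.

Definition delete_bases (E : {set T}) (B : {set {set T}}) (D : {set T}) :=
  [set I : {set T} | (I \subset E :\: D) && indep B I && (#|I| == rk B (E :\: D))].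

Definition contract_bases (E : {set T}) (B : {set {set T}}) (C : {set T}) :=
  [set J : {set T} | (J \subset E :\: C) &&
     [exists BC : {set T}, [&& BC \subset C, indep B BC, #|BC| == rk B C
                             & J :|: BC \in B]]].

(* connectivity of an (undirected) graph with vertex predicate V and adjacency adj;
   the empty graph is connected *)
Definition gconnected (X : eqType) (V : pred X) (adj : rel X) : Prop :=
  forall x y, V x -> V y ->
    exists p : seq X, [/\ path (fun a b => adj a b || adj b a) x p,
                          last x p = y & all V p].

Definition bp_vertex (E : {set T}) (B : {set {set T}})
  (t : {set T} * {set T} * {set T}) : bool :=
  let: (A1, A2, A3) := t in
  [&& A1 \in B, A2 \in B, [disjoint A1 & A2] & A3 == E :\: (A1 :|: A2)].

Definition bp_adj (t u : {set T} * {set T} * {set T}) : bool :=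
  let: (A1, A2, A3) := t in let: (B1, B2, B3) := u in
  #|A1 :\: B1| + #|A2 :\: B2| + #|A3 :\: B3| == 2.

Definition bp_connected (E : {set T}) (B : {set {set T}}) : Prop :=
  gconnected (bp_vertex E B) bp_adj.

Definition minors_bp_connected (E : {set T}) (B : {set {set T}}) : Prop :=
  forall C D : {set T}, C \subset E -> D \subset E -> [disjoint C & D] ->
    bp_connected (E :\: D :\: C) (contract_bases (E :\: D) (delete_bases E B D) C).

(* multisets on T are multiplicity functions T -> nat;
   multisets of bases are multiplicity functions {set T} -> nat *)

Definition GM_vertex (B : {set {set T}}) (k : nat) (S : T -> nat)
  (m : {ffun {set T} -> nat}) : bool :=
  [&& \sum_(B0 : {set T}) m B0 == k,
      [forall B0 : {set T}, (0 < m B0) ==> (B0 \in B)] &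
      [forall x : T, \sum_(B0 : {set T}) m B0 * (x \in B0) == S x]].

Definition GM_step (m m' : {ffun {set T} -> nat}) : bool :=
  [exists Bi : {set T}, exists Bj : {set T}, exists bi : T, exists bj : T,
    [&& Bi != Bj, 0 < m Bi, 0 < m Bj, bi \in Bi :\: Bj, bj \in Bj :\: Bi &
        m' == [ffun B0 => m B0 - (B0 == Bi) - (B0 == Bj)
                         + (B0 == bj |: (Bi :\ bi)) + (B0 == bi |: (Bj :\ bj))]]].

Definition GM_connected (B : {set {set T}}) (k : nat) (S : T -> nat) : Prop :=
  gconnected (GM_vertex B k S) GM_step.

Definition GM'_vertex (B : {set {set T}}) (k : nat) (S : T -> nat)
  (A : {ffun 'I_k -> {set T}}) : bool :=
  [forall i, A i \in B] &&
  [forall x : T, \sum_(i < k) (x \in A i) == S x].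

Definition GM'_step (k : nat) (Bt A : {ffun 'I_k -> {set T}}) : bool :=
  [exists i : 'I_k, exists j : 'I_k, exists bi : T, exists bj : T,
    [&& (i < j)%N, bi \in Bt i :\: Bt j, bj \in Bt j :\: Bt i &
        A == [ffun l => if l == i then bj |: (Bt i :\ bi)
                        else if l == j then bi |: (Bt j :\ bj) else Bt l]]].

Definition GM'_connected (B : {set {set T}}) (k : nat) (S : T -> nat) : Prop :=
  gconnected (@GM'_vertex B k S) (@GM'_step k).

End Matroids.

From mathcomp Require Import all_boot zify.
Set Implicit Arguments. Unset Strict Implicit. Unset Printing Implicit Defensive.

(* A symmetric exchange in G_M(S) can be carried out on any ordered tuple of bases realizing
   the multiset, so paths of G_M(S) lift to G'_M(S); it remains to connect two tuples with
   the same multiset, i.e. to realize every transposition of two entries A_i, A_j.  With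
   I = A_i ∩ A_j, the bases of the minor M / I \ (E - (A_i ∪ A_j)) are the sets J such that
   J ∪ I is a basis of M, so (A_i - I, A_j - I) and (A_j - I, A_i - I) are vertices of its
   basis pair graph.  An edge of that graph is a symmetric exchange between the two bases of
   the pair, hence a path joining these vertices becomes, after adding I back, a path in
   G'_M(S) from the tuple to the tuple with A_i and A_j swapped. *)

Section Linked.
Variables (X : eqType) (V : pred X) (adj : rel X).

(* [gconnected V adj] unfolds to [forall x y, V x -> V y -> linked x y]. *)
Definition linked (x y : X) : Prop :=
  exists p : seq X, [/\ path (fun a b => adj a b || adj b a) x p, last x p = y & all V p].

Lemma linked_refl x : linked x x.
Proof. by exists [::]. Qed.

Lemma linked_trans x y z : linked x y -> linked y z -> linked x z.
Proof.
move=> [p [px py pV]] [q [qy qz qV]]; exists (p ++ q).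
by rewrite cat_path px py qy last_cat py all_cat pV qV.
Qed.

Lemma linked_edge x y : V y -> adj x y || adj y x -> linked x y.
Proof. by move=> Vy xy; exists [:: y]; rewrite /= xy Vy. Qed.

Lemma linked_vertex x y : V x -> linked x y -> V y.
Proof.
move=> Vx [p [_ <- pV]]; case/lastP: p pV => [|p z] //.
by rewrite all_rcons last_rcons => /andP[].
Qed.

End Linked.

Section LinkedMap.
Variables (X Y : eqType) (V : pred X) (adj : rel X) (W : pred Y) (adjW : rel Y) (f : X -> Y).

Lemma linked_map x y :
  (forall x, V x -> W (f x)) -> (forall x y, V x -> V y -> adj x y -> adjW (f x) (f y)) ->
  V x -> linked V adj x y -> linked W adjW (f x) (f y).
Proof.
move=> fW fadj Vx [p [px <- pV]]; exists (map f p); rewrite last_map all_map.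
split=> //; last by apply/allP => z /(allP pV)/fW.
elim: p x Vx px pV => //= z p IHp x Vx /andP[xz pz] /andP[Vz pV].
rewrite IHp // andbT.
by case/orP: xz => [xz|zx]; apply/orP; [left|right]; apply: fadj.
Qed.

Hypothesis lift_edge : forall x y', V x -> W y' -> adjW (f x) y' || adjW y' (f x) ->
  exists2 y, linked V adj x y & f y = y'.

Lemma linked_lift x y' : V x -> linked W adjW (f x) y' -> exists2 y, linked V adj x y & f y = y'.
Proof.
move=> Vx [p [+ <- +]]; elim: p x Vx => [|z p IHp] x Vx /=.
  by exists x; first exact: (linked_refl V adj).
case/andP=> fxz pz /andP[Wz pW].
have [y xy fyz] := lift_edge Vx Wz fxz; subst z.
have [y2 yy2 fy2] := IHp y (linked_vertex Vx xy) pz pW.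
by exists y2 => //; apply: linked_trans xy yy2.
Qed.

End LinkedMap.

Section SetDifference.
Variable T : finType.

Lemma setDUK (X I : {set T}) : I \subset X -> (X :\: I) :|: I = X.
Proof. by move=> IX; rewrite setUC -{1}(setIidPr IX) setID. Qed.

Lemma setDDK (E X : {set T}) : X \subset E -> E :\: (E :\: X) = X.
Proof. by move=> XE; rewrite setDDr setDv set0U; apply/setIidPr. Qed.

End SetDifference.

Section MatroidBases.
Variables (T : finType) (E : {set T}) (B : {set {set T}}).
Hypothesis matroidB : is_matroid E B.

Lemma card_bases B1 B2 : B1 \in B -> B2 \in B -> #|B1| = #|B2|.
Proof.
case: matroidB => _ _ exchange B1B B2B.
move: {2}#|B1 :\: B2| (erefl #|B1 :\: B2|) => n.
elim: n B1 B1B => [|n IHn] B1 B1B dn.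
  have sub12 : B1 \subset B2 by rewrite -setD_eq0 -cards_eq0 dn.
  suff sub21 : B2 \subset B1 by rewrite (eqP (_ : B1 == B2)) // eqEsubset sub12.
  apply/subsetP => y yB2; apply: contraT => yB1.
  have [z /setDP[/(subsetP sub12) zB2 /negP //]] : exists2 z, z \in B1 :\: B2 & _ :=
    exchange _ _ B2B B1B y (introT setDP (conj yB2 yB1)).
have [x x12] : exists x, x \in B1 :\: B2 by apply/set0Pn; rewrite -card_gt0 dn.
have [y y21 B1'B] := exchange _ _ B1B B2B x x12.
move: x12 y21; rewrite !inE => /andP[xB2 xB1] /andP[yB1 yB2].
rewrite -(IHn _ B1'B).
  by rewrite cardsU1 !inE (negbTE yB1) andbF (cardsD1 x B1) xB1.
have -> : (y |: B1 :\ x) :\: B2 = (B1 :\: B2) :\ x.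
  apply/setP => z; rewrite !inE; case: (eqVneq z y) => [->|_] /=; first by rewrite yB2 andbF.
  by rewrite andbCA.
by have := cardsD1 x (B1 :\: B2); rewrite dn inE xB1 xB2 add1n => -[].
Qed.

Lemma rk_basis (Z X : {set T}) : X \in B -> X \subset Z -> rk B Z = #|X|.
Proof.
move=> XB XZ; apply/eqP; rewrite eqn_leq; apply/andP; split.
  apply/bigmax_leqP => J /andP[/existsP[B0 /andP[B0B JB0]] _].
  by rewrite -(card_bases B0B XB) subset_leq_card.
apply: (@leq_bigmax_cond _ (fun J => indep B J && (J \subset Z)) (fun J => #|J|) X).
by rewrite XZ andbT; apply/existsP; exists X; rewrite XB subxx.
Qed.

Lemma delete_basesE (D X J : {set T}) : X \in B -> X \subset E :\: D ->
  (J \in delete_bases E B D) = (J \subset E :\: D) && (J \in B).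
Proof.
move=> XB XD; rewrite inE (rk_basis XB XD); case: (J \subset E :\: D) => //=.
apply/andP/idP => [[/existsP[B0 /andP[B0B JB0]] /eqP cardJ] | JB].
  by rewrite (_ : J = B0) //; apply/eqP; rewrite eqEcard JB0 cardJ (card_bases B0B XB) leqnn.
by rewrite (card_bases JB XB); split=> //; apply/existsP; exists J; rewrite JB subxx.
Qed.

End MatroidBases.

Section Contraction.
Variables (T : finType) (B : {set {set T}}).

Lemma rk_indep (I X : {set T}) : X \in B -> I \subset X -> rk B I = #|I|.
Proof.
move=> XB IX; apply/eqP; rewrite eqn_leq; apply/andP; split.
  by apply/bigmax_leqP => J /andP[_ JI]; apply: subset_leq_card.
apply: (@leq_bigmax_cond _ (fun J => indep B J && (J \subset I)) (fun J => #|J|) I).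
by rewrite subxx andbT; apply/existsP; exists X; rewrite XB IX.
Qed.

Lemma contract_basesE (Z I X J : {set T}) : X \in B -> I \subset X ->
  (J \in contract_bases Z B I) = (J \subset Z :\: I) && (J :|: I \in B).
Proof.
move=> XB IX; rewrite inE (rk_indep XB IX); case: (J \subset Z :\: I) => //=.
apply/existsP/idP => [[BC /and4P[BC_I _ /eqP cardBC JBC]] | JIB].
  by rewrite -(_ : BC = I) //; apply/eqP; rewrite eqEcard BC_I cardBC leqnn.
exists I; rewrite subxx JIB eqxx !andbT.
by apply/existsP; exists X; rewrite XB IX.
Qed.

End Contraction.

Lemma exchange_minor_basesE (T : finType) (E : {set T}) (B : {set {set T}}) (X Y J : {set T}) :
  is_matroid E B -> X \in B -> Y \in B ->
  (J \in contract_bases (X :|: Y) (delete_bases E B (E :\: (X :|: Y))) (X :&: Y)) =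
  (J \subset (X :|: Y) :\: (X :&: Y)) && (J :|: (X :&: Y) \in B).
Proof.
move=> matroidB XB YB; have [_ baseE _] := matroidB.
have XYE : X :|: Y \subset E by rewrite subUset !baseE.
have E_D := setDDK XYE.
have XD : X \subset E :\: (E :\: (X :|: Y)) by rewrite E_D subsetUl.
have Xdel : X \in delete_bases E B (E :\: (X :|: Y)).
  by rewrite (delete_basesE matroidB _ XB XD) XD XB.
rewrite (contract_basesE _ _ Xdel (subsetIl X Y)) (delete_basesE matroidB _ XB XD) E_D.
case JZ : (J \subset _) => //=.
by rewrite subUset (subset_trans JZ (subsetDl _ _)) (subset_trans (subsetIl _ _) (subsetUl _ _)).
Qed.

Section Tuples.
Variables (T : finType) (k : nat).
Local Notation btuple := {ffun 'I_k -> {set T}}.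

Definition update2 (A : btuple) (i j : 'I_k) (U V : {set T}) : btuple :=
  [ffun l => if l == i then U else if l == j then V else A l].

Lemma update2_i (A : btuple) i j U V : update2 A i j U V i = U.
Proof. by rewrite ffunE eqxx. Qed.

Lemma update2_j (A : btuple) i j U V : i != j -> update2 A i j U V j = V.
Proof. by move=> ij; rewrite ffunE eq_sym (negbTE ij) eqxx. Qed.

Lemma update2_id (A : btuple) i j : update2 A i j (A i) (A j) = A.
Proof. by apply/ffunP => l; rewrite ffunE; case: eqP => [->|_] //; case: eqP => [->|]. Qed.

Lemma update2_update2 (A : btuple) i j U V U' V' :
  update2 (update2 A i j U V) i j U' V' = update2 A i j U' V'.
Proof. by apply/ffunP => l; rewrite !ffunE; case: eqP => //; case: eqP. Qed.

Lemma GM'_step_update2 (A : btuple) i j bi bj :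
  i != j -> bi \in A i :\: A j -> bj \in A j :\: A i ->
  GM'_step A (update2 A i j (bj |: (A i :\ bi)) (bi |: (A j :\ bj))).
Proof.
move=> ij bi_ij bj_ji; case: (ltngtP i j) => [lt_ij | lt_ji | /val_inj eq_ij].
- by apply/existsP; exists i; apply/existsP; exists j; apply/existsP; exists bi;
    apply/existsP; exists bj; rewrite lt_ij bi_ij bj_ji eqxx.
- apply/existsP; exists j; apply/existsP; exists i; apply/existsP; exists bj;
    apply/existsP; exists bi; rewrite lt_ji bi_ij bj_ji /=.
  apply/eqP/ffunP => l; rewrite !ffunE.
  by case: (eqVneq l i) => [->|]; rewrite ?(negbTE ij) // eq_sym (negbTE ij).
- by rewrite eq_ij eqxx in ij.
Qed.

Lemma bigD2 (F : 'I_k -> nat) i j : i != j ->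
  \sum_l F l = F i + F j + \sum_(l | (l != i) && (l != j)) F l.
Proof. by move=> ij; rewrite (bigD1 i) //= (bigD1 j) /= 1?eq_sym // addnA. Qed.

Lemma sum_update2 (F : {set T} -> nat) (A : btuple) i j U V : i != j ->
  \sum_l F (update2 A i j U V l) + F (A i) + F (A j) = \sum_l F (A l) + F U + F V.
Proof.
move=> ij; rewrite !(bigD2 _ ij) update2_i update2_j //.
rewrite (eq_bigr (F \o A)) => [/=|l /andP[li lj]]; last by rewrite ffunE (negbTE li) (negbTE lj).
lia.
Qed.

Definition mset_of (A : btuple) : {ffun {set T} -> nat} :=
  [ffun B0 => \sum_(l < k) (B0 == A l)].

Lemma mset_of_update2 (A : btuple) i j U V : i != j ->
  mset_of (update2 A i j U V) =
  [ffun B0 => mset_of A B0 - (B0 == A i) - (B0 == A j) + (B0 == U) + (B0 == V)].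
Proof.
move=> ij; apply/ffunP => B0; rewrite !ffunE.
have /= := sum_update2 (fun X => nat_of_bool (B0 == X)) A U V ij.
rewrite (bigD2 (fun l => nat_of_bool (B0 == A l)) ij).
lia.
Qed.

Lemma sum_mset_of (F : {set T} -> nat) (A : btuple) :
  \sum_B0 mset_of A B0 * F B0 = \sum_l F (A l).
Proof.
under eq_bigr => B0 _ do rewrite ffunE big_distrl /=.
rewrite exchange_big; apply: eq_bigr => l _.
by rewrite (bigD1 (A l)) //= eqxx mul1n big1 ?addn0 // => B0 /negbTE->.
Qed.

Lemma mset_of_gt0 (A : btuple) B0 : (0 < mset_of A B0) = [exists l, B0 == A l].
Proof.
rewrite ffunE; apply/idP/existsP => [|[l B0l]]; last by rewrite (bigD1 l) //= B0l.
by rewrite lt0n sum_nat_eq0 => /forallPn[l]; rewrite eqb0 negbK; exists l.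
Qed.

Variables (B : {set {set T}}) (S : T -> nat).

Lemma GM_vertex_mset_of (A : btuple) : GM_vertex B k S (mset_of A) = GM'_vertex B S A.
Proof.
rewrite /GM_vertex /GM'_vertex.
have -> : \sum_B0 mset_of A B0 == k.
  have := sum_mset_of (fun=> 1) A; rewrite sum1_card card_ord => <-.
  by apply/eqP/eq_bigr => B0 _; rewrite muln1.
have -> : [forall B0, (0 < mset_of A B0) ==> (B0 \in B)] = [forall l, A l \in B].
  apply/forallP/forallP => [inB l | inB B0].
    by apply: (implyP (inB (A l))); rewrite mset_of_gt0; apply/existsP; exists l.
  by apply/implyP; rewrite mset_of_gt0 => /existsP[l /eqP->].
suff -> : [forall x, \sum_B0 mset_of A B0 * (x \in B0) == S x] =
          [forall x, \sum_l (x \in A l) == S x] by [].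
by apply: eq_forallb => x; rewrite (sum_mset_of (fun X => nat_of_bool (x \in X))).
Qed.

Lemma GM'_vertex_update2 (A : btuple) i j U V :
  GM'_vertex B S A -> i != j -> U \in B -> V \in B ->
  (forall x, (x \in U) + (x \in V) = (x \in A i) + (x \in A j)) ->
  GM'_vertex B S (update2 A i j U V).
Proof.
move=> /andP[/forallP AB /forallP AS] ij UB VB UV; apply/andP; split.
  by apply/forallP => l; rewrite ffunE; case: ifP => // _; case: ifP.
apply/forallP => x; rewrite -(eqP (AS x)); apply/eqP/(@addIn ((x \in A i) + (x \in A j))).
by rewrite addnA (sum_update2 (fun X => nat_of_bool (x \in X))) // -addnA UV.
Qed.

Lemma GM_step_lift (A : btuple) m' :
  GM_step (mset_of A) m' -> exists2 A', GM'_step A A' & mset_of A' = m'.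
Proof.
case/existsP=> Bi /existsP[Bj /existsP[bi /existsP[bj]]].
case/and5P=> BiBj; rewrite !mset_of_gt0 => /existsP[i /eqP Ai] /existsP[j /eqP Aj].
subst Bi Bj => bi_ij /andP[bj_ji /eqP->].
have ij : i != j by apply: contraNneq BiBj => ->.
exists (update2 A i j (bj |: (A i :\ bi)) (bi |: (A j :\ bj))); first exact: GM'_step_update2.
exact: mset_of_update2.
Qed.

Lemma GM_step_lift_rev (A : btuple) m' :
  GM_step m' (mset_of A) -> exists2 A', GM'_step A' A & mset_of A' = m'.
Proof.
case/existsP=> Bi /existsP[Bj /existsP[bi /existsP[bj]]].
case/and5P=> BiBj Bi_gt0 Bj_gt0 bi_ij /andP[bj_ji /eqP msetA].
pose U := bj |: (Bi :\ bi); pose V := bi |: (Bj :\ bj).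
have [i /eqP Ai] : exists i, U == A i.
  by apply/existsP; rewrite -mset_of_gt0 msetA ffunE eqxx addn1.
have [j /eqP Aj] : exists j, V == A j.
  by apply/existsP; rewrite -mset_of_gt0 msetA ffunE eqxx addn1.
have ij : i != j.
  apply: contraTneq bj_ji => eq_ij.
  have : bj \in V by rewrite Aj -eq_ij -Ai !inE eqxx.
  rewrite !inE eqxx /= orbF => /eqP->.
  by move: bi_ij; rewrite !inE => /andP[/negbTE-> _]; rewrite andbF.
exists (update2 A i j Bi Bj).
  have := GM'_step_update2 (A := update2 A i j Bi Bj) (bi := bi) (bj := bj) ij.
  by rewrite update2_i update2_j // update2_update2 -/U -/V Ai Aj update2_id; apply.
apply/ffunP => B0; rewrite mset_of_update2 // ffunE msetA ffunE -Ai -Aj.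
suff : (B0 == Bi) + (B0 == Bj) <= m' B0.
  rewrite -/U -/V.
  by move: (m' B0) (nat_of_bool _) (nat_of_bool _) (nat_of_bool _) (nat_of_bool _); lia.
case: (eqVneq B0 Bi) => [->|_]; first by rewrite (negbTE BiBj).
by case: (eqVneq B0 Bj) => [->|_].
Qed.

Local Notation tuple_linked := (linked (GM'_vertex B S) (@GM'_step T k)).

Lemma GM_edge_lift (A : btuple) m' : GM_vertex B k S m' ->
  GM_step (mset_of A) m' || GM_step m' (mset_of A) ->
  exists2 A', tuple_linked A A' & mset_of A' = m'.
Proof.
move=> m'V /orP[/GM_step_lift | /GM_step_lift_rev] [A' AA' eqA']; exists A' => //;
  by apply: linked_edge; rewrite ?AA' ?orbT // -GM_vertex_mset_of eqA'.
Qed.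

Lemma mset_of_swap (A : btuple) i j : i != j -> mset_of (update2 A i j (A j) (A i)) = mset_of A.
Proof.
move=> ij; apply/ffunP => B0; rewrite mset_of_update2 // ffunE.
have : (B0 == A i) + (B0 == A j) <= mset_of A B0 by rewrite ffunE (bigD2 _ ij) leq_addr.
by move: (mset_of A B0) (nat_of_bool _) (nat_of_bool _); lia.
Qed.

Lemma mset_of_eq_mismatch (A A' : btuple) i : mset_of A = mset_of A' -> A i != A' i ->
  exists j, (A j == A' i) && (A' j != A' i).
Proof.
move=> eqA Ai; apply/existsP; apply: contraT => /existsPn same.
have := congr1 (fun m : {ffun {set T} -> nat} => m (A' i)) eqA.
rewrite /= !ffunE (bigD1 i) //= [in RHS](bigD1 i) //=.
rewrite eqxx [A' i == A i]eq_sym (negbTE Ai) add0n add1n => eq_sums.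
suff : \sum_(l | l != i) (A' i == A l) <= \sum_(l | l != i) (A' i == A' l).
  by rewrite eq_sums ltnn.
apply: leq_sum => l _; have := same l; rewrite ![A' i == _]eq_sym; case: eqP => //= _.
by rewrite negbK => ->.
Qed.

Hypothesis swap_linked : forall (A : btuple) i j, GM'_vertex B S A -> i != j ->
  tuple_linked A (update2 A i j (A j) (A i)).

Lemma linked_mset_of (A A' : btuple) :
  GM'_vertex B S A -> mset_of A = mset_of A' -> tuple_linked A A'.
Proof.
move: {2}_.+1 (ltnSn #|[set l | A l != A' l]|) => n; elim: n A => // n IHn A.
rewrite ltnS => le_n AV eqA.
case: (pickP (fun l => A l != A' l)) => [i Ai | same]; last first.
  rewrite (_ : A = A'); first exact: linked_refl.
  by apply/ffunP => l; apply/eqP/negbFE/same.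
have [j /andP[/eqP Aj A'j]] := mset_of_eq_mismatch eqA Ai.
have ij : i != j by apply: contraNneq Ai => eq_ij; rewrite {1}eq_ij Aj.
apply: linked_trans (swap_linked AV ij) (IHn _ _ _ _); last by rewrite mset_of_swap.
  apply: leq_trans le_n; apply: proper_card; apply/properP; split.
    apply/subsetP => l; rewrite !inE ffunE.
    case: (eqVneq l i) => [->|_]; first by rewrite Aj eqxx.
    by case: (eqVneq l j) => [-> _|] //; rewrite Aj eq_sym.
  by exists i; rewrite !inE ?ffunE ?eqxx ?Aj // negbK.
by rewrite -GM_vertex_mset_of mset_of_swap // GM_vertex_mset_of.
Qed.

End Tuples.

Section Partitions.
Variable T : finType.

Lemma partition_complement (Z A1 A2 : {set T}) :
  A1 :|: A2 = Z -> [disjoint A1 & A2] -> A2 = Z :\: A1.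
Proof.
move=> <- /pred0P disj; apply/setP => x; rewrite !inE.
by have := disj x; rewrite /= ?inE; case: (x \in A1); case: (x \in A2).
Qed.

Lemma partition_count (X Y A1 A2 : {set T}) x :
  A1 :|: A2 = (X :|: Y) :\: (X :&: Y) -> [disjoint A1 & A2] ->
  (x \in A1 :|: X :&: Y) + (x \in A2 :|: X :&: Y) = (x \in X) + (x \in Y).
Proof.
move=> /setP /(_ x) eqU /pred0P /(_ x) disj; move: eqU disj; rewrite /= !inE.
by case: (x \in A1); case: (x \in A2); case: (x \in X); case: (x \in Y).
Qed.

Lemma partition_exchange (Z A1 A2 B1 B2 : {set T}) :
  A1 :|: A2 = Z -> [disjoint A1 & A2] -> B1 :|: B2 = Z -> [disjoint B1 & B2] ->
  #|A1| = #|B1| -> #|A1 :\: B1| + #|A2 :\: B2| = 2 ->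
  exists a b, [/\ a \in A1, b \in A2, B1 = b |: (A1 :\ a) & B2 = a |: (A2 :\ b)].
Proof.
move=> eqA disjA eqB disjB cardAB dist2.
have A2E := partition_complement eqA disjA; have B2E := partition_complement eqB disjB.
have B1Z : B1 \subset Z by rewrite -eqB subsetUl.
have A1Z : A1 \subset Z by rewrite -eqA subsetUl.
have D21 : A2 :\: B2 = B1 :\: A1.
  apply/setP => x; rewrite A2E B2E !inE.
  case: (boolP (x \in B1)) => [/(subsetP B1Z)->|_]; rewrite ?andbF ?andbT //=.
  by case: (x \in Z); rewrite ?andbF.
have cardD : #|B1 :\: A1| = #|A1 :\: B1| by rewrite !cardsD setIC cardAB.
rewrite D21 cardD in dist2.
have /cards1P[a eqa] : #|A1 :\: B1| == 1 by rewrite (_ : #|A1 :\: B1| = 1) //; lia.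
have /cards1P[b eqb] : #|B1 :\: A1| == 1 by rewrite cardD; apply/cards1P; exists a.
have facts x : [/\ (x \in A1) && (x \notin B1) = (x == a),
    (x \in B1) && (x \notin A1) = (x == b), (x \in A1) ==> (x \in Z) & (x \in B1) ==> (x \in Z)].
  split; try exact/implyP/subsetP.
    by move/setP: eqa => /(_ x); rewrite !inE andbC.
  by move/setP: eqb => /(_ x); rewrite !inE andbC.
exists a, b; rewrite A2E B2E; split.
- by have [fa _ _ _] := facts a; move: fa; rewrite eqxx => /andP[].
- have [_ fb _ bZ] := facts b; move: fb; rewrite eqxx => /andP[bB1 bA1].
  by rewrite inE bA1 (implyP bZ bB1).
- apply/setP => x; have [] := facts x; rewrite !inE.
  by case: (x \in A1); case: (x \in B1); case: (x == a); case: (x == b).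
- apply/setP => x; have [] := facts x; rewrite !inE.
  by case: (x \in A1); case: (x \in B1); case: (x \in Z); case: (x == a); case: (x == b).
Qed.

Lemma exchange_setU (A1 A2 I : {set T}) a b :
  a \in A1 -> b \in A2 -> [disjoint A1 & A2] -> [disjoint A1 :|: A2 & I] ->
  [/\ a \in (A1 :|: I) :\: (A2 :|: I), b \in (A2 :|: I) :\: (A1 :|: I),
      b |: ((A1 :|: I) :\ a) = (b |: (A1 :\ a)) :|: I &
      a |: ((A2 :|: I) :\ b) = (a |: (A2 :\ b)) :|: I].
Proof.
move=> aA1 bA2 /pred0P disj12 /pred0P disjI.
have [a12 aI] : a \notin A2 /\ a \notin I.
  by move: (disj12 a) (disjI a); rewrite /= !inE aA1 /= => -> ->.
have [b12 bI] : b \notin A1 /\ b \notin I.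
  by move: (disj12 b) (disjI b); rewrite /= !inE bA2 orbT andbT /= => -> ->.
split; rewrite ?inE ?aA1 ?bA2 ?(negbTE a12) ?(negbTE aI) ?(negbTE b12) ?(negbTE bI) //;
  apply/setP => x; rewrite !inE.
  case: (eqVneq x a) => [->|_]; first by rewrite (negbTE aI) /= !orbF.
  by case: (x == b); case: (x \in A1); case: (x \in I).
case: (eqVneq x b) => [->|_]; first by rewrite (negbTE bI) /= !orbF.
by case: (x == a); case: (x \in A2); case: (x \in I).
Qed.

End Partitions.

Section ExchangeMinor.
Variables (T : finType) (E : {set T}) (B : {set {set T}}) (k : nat) (S : T -> nat).
Hypotheses (matroidB : is_matroid E B) (minorsB : minors_bp_connected E B).
Variables (A : {ffun 'I_k -> {set T}}) (i j : 'I_k).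
Hypotheses (AV : GM'_vertex B S A) (ij : i != j).

Local Notation I := (A i :&: A j).
Local Notation Z := ((A i :|: A j) :\: (A i :&: A j)).
Local Notation minor_bases :=
  (contract_bases (A i :|: A j) (delete_bases E B (E :\: (A i :|: A j))) (A i :&: A j)).

Let AiB : A i \in B. Proof. by case/andP: AV => /forallP. Qed.
Let AjB : A j \in B. Proof. by case/andP: AV => /forallP. Qed.

Lemma bp_vertex_minorP A1 A2 A3 : bp_vertex Z minor_bases (A1, A2, A3) ->
  [/\ A1 :|: I \in B, A2 :|: I \in B, A1 :|: A2 = Z, [disjoint A1 & A2]
    & A3 = set0 /\ #|A1| + #|I| = #|A i|].
Proof.
case/and4P; rewrite !(exchange_minor_basesE _ matroidB AiB AjB).
move=> /andP[A1Z A1IB] /andP[A2Z A2IB] disj12 /eqP ->.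
have cardI (Ak : {set T}) : Ak \subset Z -> Ak :|: I \in B -> #|Ak| + #|I| = #|A i|.
  move=> /subsetDP[_ /disjoint_setI0 AkI] AkIB.
  by rewrite -(card_bases matroidB AkIB AiB) -cardsUI AkI cards0 addn0.
have cardZ : #|Z| + #|I| + #|I| = #|A i| + #|A j|.
  have IXY : I \subset A i :|: A j by rewrite (subset_trans (subsetIl _ _) (subsetUl _ _)).
  by have := cardsUI (A i) (A j); have := cardsID I (A i :|: A j); rewrite (setIidPr IXY); lia.
have eqZ : A1 :|: A2 = Z.
  apply/eqP; rewrite eqEcard subUset A1Z A2Z (cardsU A1 A2) (disjoint_setI0 disj12).
  rewrite cards0 subn0; move: cardZ (cardI _ A1Z A1IB) (cardI _ A2Z A2IB).
  by rewrite (card_bases matroidB AjB AiB); lia.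
by rewrite eqZ setDv; do 2!split=> //; apply: cardI.
Qed.

Definition lift_pair (t : {set T} * {set T} * {set T}) : {ffun 'I_k -> {set T}} :=
  update2 A i j (t.1.1 :|: I) (t.1.2 :|: I).

Lemma lift_pair_vertex t : bp_vertex Z minor_bases t -> GM'_vertex B S (lift_pair t).
Proof.
case: t => [[A1 A2] A3] /bp_vertex_minorP[A1IB A2IB eqZ disj12 _].
by apply: GM'_vertex_update2 => // x; apply: partition_count.
Qed.

Lemma lift_pair_step t u : bp_vertex Z minor_bases t -> bp_vertex Z minor_bases u ->
  bp_adj t u -> GM'_step (lift_pair t) (lift_pair u).
Proof.
case: t u => [[A1 A2] A3] [[B1 B2] B3].
case/bp_vertex_minorP=> _ _ eqA disjA [-> cardA] /bp_vertex_minorP[_ _ eqB disjB [-> cardB]].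
rewrite /bp_adj setDv cards0 addn0 => /eqP dist2.
have cardAB : #|A1| = #|B1| by apply/(@addIn #|I|); rewrite cardA cardB.
have [a [b [aA1 bA2 -> ->]]] := partition_exchange eqA disjA eqB disjB cardAB dist2.
have disjI : [disjoint A1 :|: A2 & I] by move: (subxx Z); rewrite -{1}eqA subsetD => /andP[].
have [a_ij b_ji eq1 eq2] := exchange_setU aA1 bA2 disjA disjI.
have := GM'_step_update2 (A := lift_pair (A1, A2, A3)) (bi := a) (bj := b) ij.
by rewrite /lift_pair /= update2_i update2_j // update2_update2 eq1 eq2; apply.
Qed.

Lemma lift_pair_ends :
  lift_pair (A i :\: I, A j :\: I, Z :\: (A i :\: I :|: A j :\: I)) = A /\
  lift_pair (A j :\: I, A i :\: I, Z :\: (A j :\: I :|: A i :\: I)) = update2 A i j (A j) (A i).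
Proof. by rewrite /lift_pair /= !setDUK ?subsetIl ?subsetIr ?update2_id. Qed.

Lemma bp_vertex_minor_ends :
  bp_vertex Z minor_bases (A i :\: I, A j :\: I, Z :\: (A i :\: I :|: A j :\: I)) /\
  bp_vertex Z minor_bases (A j :\: I, A i :\: I, Z :\: (A j :\: I :|: A i :\: I)).
Proof.
have basis_minus_I X : X \in B -> X \subset A i :|: A j -> I \subset X -> X :\: I \in minor_bases.
  by move=> XB XZ IX; rewrite (exchange_minor_basesE _ matroidB AiB AjB) setSD // setDUK.
have disjD : [disjoint A i :\: I & A j :\: I].
  by rewrite -setI_eq0; apply/eqP/setP => x; rewrite !inE; case: (x \in A i); case: (x \in A j).
rewrite /= !basis_minus_I ?subsetUl ?subsetUr ?subsetIl ?subsetIr ?disjD ?eqxx //.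
by rewrite disjoint_sym disjD.
Qed.

Lemma minor_bp_connected : bp_connected Z minor_bases.
Proof.
have [_ baseE _] := matroidB.
have XYE : A i :|: A j \subset E by rewrite subUset !baseE.
have := minorsB (C := I) (D := E :\: (A i :|: A j)); rewrite setDDK //; apply.
- exact: subset_trans (subsetIl _ _) (baseE _ AiB).
- exact: subsetDl.
- rewrite -setI_eq0; apply/eqP/setP => x; rewrite !inE.
  by case: (x \in A i); case: (x \in A j).
Qed.

Lemma linked_swap : linked (GM'_vertex B S) (@GM'_step T k) A (update2 A i j (A j) (A i)).
Proof.
have [endA endswap] := lift_pair_ends; rewrite -{}endswap -{1}endA.
have [end1 end2] := bp_vertex_minor_ends.
exact: linked_map lift_pair_vertex lift_pair_step end1 (minor_bp_connected end1 end2).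
Qed.

End ExchangeMinor.

Theorem theorem2p5 (T : finType) (E : {set T}) (B : {set {set T}})
  (k : nat) (S : T -> nat) :
  is_matroid E B ->
  minors_bp_connected E B ->
  (2 <= k)%N ->
  (forall x, (0 < S x)%N -> x \in E) ->
  \sum_(x : T) S x = (k * rk B E)%N ->
  GM_connected B k S ->
  GM'_connected B k S.
Proof.
move=> matroidB minorsB _ _ _ GM_conn A A' AV A'V.
have [A2 AA2 msetA2] := linked_lift (fun A0 m' _ => @GM_edge_lift T k B S A0 m') AV
  (GM_conn _ _ (etrans (GM_vertex_mset_of B S A) AV) (etrans (GM_vertex_mset_of B S A') A'V)).
apply: linked_trans AA2 (linked_mset_of _ (linked_vertex AV AA2) msetA2).
exact: linked_swap matroidB minorsB.
Qed.
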